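(* Let $K$ be a finite field of characteristic $p$ and order $q$, let $s$ be a positive integer with $\gcd(s,q-1)=1$, let $k$ be a positive integer with $p\equiv1\pmod k$, let $\lambda$ be a primitive $k$th root of unity in $\mathbb{F}_p^\times$, and for $u\in K^\times$ let $\Omega_u=\sum_{i=0}^{k-1}W_{\lambda^iu}$. Then (i) $\sum_{u\in K^\times}\Omega_u^0=q-1$; (ii) $\sum_{u\in K^\times}\Omega_u=kq$; (iii) $\sum_{u\in K^\times}\Omega_u^2=kq^2$; (iv) if $k=2$, then $\sum_{u\in K^\times}\Omega_u^3=2q^2\big(V^{[1,1]}_1+3V^{[1,1]}_{-1}\big)$.
   Context: $\zeta=\exp(2\pi i/p)$, $\psi(x)=\zeta^{\mathrm{Tr}(x)}$ with $\mathrm{Tr}$ the absolute trace of $K$ to $\mathbb{F}_p$; $W_u=\sum_{x\in K}\psi(x^s-ux)$. Let $1/s$ denote the inverse of $s$ modulo $q-1$. For $a,b\in K$, $Q^{(1,1)}_{a,b}$ is the number of $(v_1,v_2)\in K^2$ with $v_1+v_2=a$ and $(v_1^s+v_2^s)^{1/s}=b$, and $V^{[1,1]}_u=Q^{(1,1)}_{1,u}-Q^{(1,1)}_{1,0}$ for $u\in K^\times$. *)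

From mathcomp Require Import all_boot all_order all_algebra all_field.
Set Implicit Arguments. Unset Strict Implicit. Unset Printing Implicit Defensive.
Import GRing.Theory Num.Theory.
Local Open Scope ring_scope.

(* zeta = exp(2 pi i / p), realised in algC: p.-root (-1) is exp(i pi / p)
   (the root of -1 of minimal nonnegative argument), so its square is
   exp(2 pi i / p). *)
Definition zeta (p : nat) : algC := (p.-root (-1)) ^+ 2.

Section Defs.
Variables (K : finFieldType) (p : nat).

Definition absTr (x : K) : K := \sum_(i < logn p #|K|) x ^+ (p ^ i).

Definition trnat (x : K) : nat :=
  odflt 0%N (omap val [pick m : 'I_p | (m%:R : K) == absTr x]).

Definition psi (x : K) : algC := zeta p ^+ trnat x.

Definition W (s : nat) (u : K) : algC := \sum_(x : K) psi (x ^+ s - u * x).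

Definition Omega (s k : nat) (lam u : K) : algC :=
  \sum_(i < k) W s (lam ^+ i * u).

(* 1/s : the inverse of s modulo q-1, taken in {1,..,q-1} (so that x^(1/s)
   is the inverse of the bijection x |-> x^s, also at x = 0) *)
Definition sinv (s : nat) : nat :=
  odflt 1%N (omap val [pick t : 'I_#|K| |
     (0 < t)%N && (s * t == 1 %[mod #|K|.-1])%N]).

Definition Q11 (s : nat) (a b : K) : nat :=
  #|[set v : K * K | (v.1 + v.2 == a) &&
                     ((v.1 ^+ s + v.2 ^+ s) ^+ sinv s == b)]|.

Definition V11 (s : nat) (u : K) : int := (Q11 s 1 u)%:Z - (Q11 s 1 0)%:Z.

End Defs.

From mathcomp Require Import all_boot all_order all_algebra all_field.
From mathcomp Require Import ring.
Set Implicit Arguments. Unset Strict Implicit. Unset Printing Implicit Defensive.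
Import GRing.Theory Num.Theory.
Local Open Scope ring_scope.

(* Writing W_(c u) = \sum_x psi(x^s) psi(-c x u) and using the orthogonality
   \sum_u psi(t u) = q [t = 0] of the nontrivial additive character psi, each
   moment of the Omega_u collapses to a count of solutions of a linear
   equation among s-th powers: the first moment picks x = 0, the second picks
   lambda^i = lambda^j, and for k = 2 (so lambda = -1) the third moment counts
   the v with v^s + (1 - v)^s = +-1, i.e. Q_(1,+-1) because x |-> x^s is a
   bijection, while Q_(1,0) = 0. *)

Section PrimeSubfield.
Variables (R : idomainType) (p : nat).
Hypothesis pR : p \in [pchar R].

Let p_prime : prime p := pcharf_prime pR.

Lemma natr_eq_pchar (a b : nat) : (a%:R == b%:R :> R) = (a == b %[mod p])%N.
Proof.
wlog le_ab : a b / (a <= b)%N.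
  by move=> IH; case: (leqP a b) => [|/ltnW] ?; [|rewrite eq_sym [RHS]eq_sym]; apply: IH.
rewrite [(a == _ %[mod p])%N]eq_sym eqn_mod_dvd // (dvdn_pcharf pR) natrB //.
by rewrite subr_eq0 eq_sym.
Qed.

(* 'X^p - 'X has at most p roots, and the p elements m%:R (m < p) are roots. *)
Lemma frobenius_fixed_nat (t : R) : t ^+ p = t -> exists m : 'I_p, m%:R = t.
Proof.
move=> tp; have [m /eqP mt | no_m] := pickP (fun m : 'I_p => m%:R == t); first by exists m.
pose P : {poly R} := 'X^p - 'X.
have size_P : size P = p.+1.
  by rewrite size_polyDl ?size_polyXn // size_polyN size_polyX ltnS prime_gt1.
have P_neq0 : P != 0 by rewrite -size_poly_eq0 size_P.
pose rs := t :: [seq (val m)%:R | m <- enum 'I_p].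
have rootP : all (root P) rs.
  apply/allP => y; rewrite /root !hornerE inE => /orP[/eqP -> | /mapP[m _ ->]].
    by rewrite tp subrr.
  by rewrite -(pFrobenius_autE pR) rmorph_nat subrr.
have uniq_rs : uniq rs.
  rewrite /= map_inj_uniq ?enum_uniq ?andbT.
    by apply/mapP => -[m _ mt]; move: (no_m m); rewrite -mt eqxx.
  by move=> i j /eqP; rewrite natr_eq_pchar !modn_small // => /eqP /val_inj.
by have := max_poly_roots P_neq0 rootP uniq_rs; rewrite size_P /= size_map size_enum_ord ltnn.
Qed.

End PrimeSubfield.

(* With z = p.-root (-1), zeta = z^2 has order dividing p; order 1 would give
   z = 1 or z = -1, contradicting z^p = -1 and z not being negative. *)
Lemma prim_root_zeta p : prime p -> p.-primitive_root (zeta p).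
Proof.
move=> pr_p; have p_gt1 := prime_gt1 pr_p; set z := p.-root (-1 : algC).
have zp : z ^+ p = -1 by rewrite rootCK // ltnW.
have zeta_p : zeta p ^+ p = 1 by rewrite /zeta -exprM mulnC exprM zp sqrrN expr1n.
have [d d_prim d_p] := prim_order_exists (prime_gt0 pr_p) zeta_p.
have /primeP[_ /(_ d d_p) /pred2P[d1E | dE]] := pr_p; last by rewrite dE in d_prim.
have := prim_expr_order d_prim; rewrite d1E expr1 /zeta -/z => /eqP.
rewrite sqrf_eq1 => /orP[] /eqP z1.
  by move: zp; rewrite z1 expr1n => /eqP; rewrite -addr_eq0 -(natrD _ 1 1) pnatr_eq0.
by have := rootC_lt0 (-1 : algC) p_gt1; rewrite -/z z1 ltrN10.
Qed.

Section Trace.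
Variables (K : finFieldType) (p : nat).
Hypothesis pK : p \in [pchar K].

Let p_prime : prime p := pcharf_prime pK.
Let n := logn p #|K|.
Let card_K : #|K| = (p ^ n)%N := card_pprimeChar pK.

Let n_gt0 : (0 < n)%N.
Proof. by rewrite lt0n; apply: contraTneq (finNzRing_gt1 K) => n0; rewrite card_K n0. Qed.

Lemma absTrD : {morph @absTr K p : x y / x + y}.
Proof.
move=> x y; rewrite /absTr -big_split; apply: eq_bigr => i _.
by rewrite exprDn_pchar // pnatX (pnatE _ p_prime) pK.
Qed.

Lemma absTr_frobenius (x : K) : absTr p x ^+ p = absTr p x.
Proof.
rewrite /absTr -(pFrobenius_autE pK) rmorph_sum /= -/n.
under eq_bigr => i _ do rewrite (pFrobenius_autE pK) -exprM -expnSr.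
rewrite -(prednK n_gt0) big_ord_recr big_ord_recl /= addrC prednK //.
by rewrite -card_K expf_card expn0 expr1.
Qed.

Lemma trnatK (x : K) : (trnat p x)%:R = absTr p x.
Proof.
rewrite /trnat; case: pickP => [m /eqP // | no_m].
have [m mx] := frobenius_fixed_nat pK (absTr_frobenius x).
by move: (no_m m); rewrite /= mx eqxx.
Qed.

Lemma absTr_nontrivial : exists y : K, absTr p y != 0.
Proof.
have [y | tr0] := pickP (fun y : K => absTr p y != 0); first by exists y.
(* Otherwise this nonzero polynomial of degree p^(n-1) < #|K| vanishes on K. *)
pose P : {poly K} := \sum_(i < n) 'X^(p ^ i).
have coefP1 : P`_1 = 1.
  rewrite coef_sum (bigD1 (Ordinal n_gt0)) //= coefXn expn0 eqxx big1 ?addr0 // => i i0.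
  rewrite coefXn -(expn0 p) eqn_exp2l ?prime_gt1 // eq_sym.
  by move: i0; rewrite -val_eqE /= => /negbTE ->.
have : P = 0.
  apply: (@roots_geq_poly_eq0 _ _ (enum K)); rewrite ?enum_uniq // -?cardE.
    apply/allP => y _; rewrite /root horner_sum.
    under eq_bigr do rewrite hornerXn.
    by have /negbFE := tr0 y.
  apply: leq_trans (size_sum _ _ _) _; apply/bigmax_leqP => i _.
  by rewrite size_polyXn card_K ltn_exp2l ?prime_gt1.
by move/(congr1 (fun P : {poly K} => P`_1)); rewrite coefP1 coef0 => /eqP; rewrite oner_eq0.
Qed.

Let zeta_prim := prim_root_zeta p_prime.

Lemma psiE (x : K) (m : nat) : m%:R = absTr p x -> psi p x = zeta p ^+ m.
Proof.
by move=> mx; apply/eqP; rewrite (eq_prim_root_expr zeta_prim) -(natr_eq_pchar pK) trnatK mx.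
Qed.

Lemma absTr0 : absTr p (0 : K) = 0.
Proof. by apply: (addIr (absTr p 0)); rewrite -absTrD !add0r. Qed.

Lemma psi0 : psi p (0 : K) = 1.
Proof. by rewrite (@psiE 0 0) ?absTr0. Qed.

Lemma psiD : {morph @psi K p : x y / x + y >-> x * y}.
Proof.
by move=> x y; rewrite (@psiE _ (trnat p x + trnat p y)) ?exprD // natrD !trnatK absTrD.
Qed.

Lemma psi_nontrivial : exists y : K, psi p y != 1.
Proof.
have [y tr_y] := absTr_nontrivial; exists y.
by rewrite -(expr0 (zeta p)) (eq_prim_root_expr zeta_prim) -(natr_eq_pchar pK) trnatK.
Qed.

End Trace.

Section AdditiveCharacter.
Variables (K : finFieldType) (chi : K -> algC).
Hypotheses (chiD : {morph chi : x y / x + y >-> x * y}) (chi0 : chi 0 = 1).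
Hypothesis chi_nontrivial : exists y, chi y != 1.

Lemma sum_char : \sum_x chi x = 0.
Proof.
have [y chi_y] := chi_nontrivial.
have : \sum_x chi x = chi y * \sum_x chi x.
  by rewrite {1}(reindex_inj (addrI y)) mulr_sumr; apply: eq_bigr => x _; rewrite chiD.
move/eqP; rewrite -subr_eq0 -{1}[\sum_x _]mul1r -mulrBl mulf_eq0 subr_eq0.
by rewrite eq_sym (negbTE chi_y) => /eqP.
Qed.

Lemma sum_char_mul (c : K) : \sum_x chi (c * x) = if c == 0 then #|K|%:R else 0.
Proof.
have [-> | c0] := eqVneq c 0.
  by under eq_bigr do rewrite mul0r chi0; rewrite sumr_const.
by rewrite -[RHS]sum_char [RHS](reindex_inj (mulfI c0)).
Qed.

End AdditiveCharacter.

Section PowerMap.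
Variables (K : finFieldType) (s : nat).

Section Injective.
Hypothesis s_inj : injective (fun x : K => x ^+ s).

Lemma exprN_inj (x : K) : (- x) ^+ s = - x ^+ s.
Proof.
suff N1s : (-1 : K) ^+ s = -1 by rewrite -mulN1r exprMn N1s mulN1r.
have [odd_s | even_s] := boolP (odd s); first by rewrite -signr_odd odd_s expr1.
have : (-1 : K) ^+ s = 1 ^+ s by rewrite -signr_odd (negbTE even_s) expr1n.
by move/s_inj => ->; rewrite expr1n.
Qed.

Lemma sum_expr (F : K -> algC) : \sum_x F (x ^+ s) = \sum_x F x.
Proof. by rewrite [RHS](reindex_inj s_inj). Qed.

End Injective.

Hypotheses (s_gt0 : (0 < s)%N) (s_coprime : coprime s #|K|.-1).

Lemma expr_card_pred (x : K) : x != 0 -> x ^+ #|K|.-1 = 1.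
Proof.
move=> x0; apply: (mulfI x0); rewrite mulr1 -exprS prednK ?expf_card //.
exact: ltnW (finNzRing_gt1 K).
Qed.

Lemma sinv_exists : exists t : 'I_#|K|, (0 < t)%N && (s * t == 1 %[mod #|K|.-1])%N.
Proof.
have q_gt1 := finNzRing_gt1 K.
have [km kn kmE _] := egcdnP #|K|.-1 s_gt0; rewrite (eqP s_coprime) in kmE.
have km_gt0 : (0 < km)%N by case: km kmE => //; rewrite mul0n addn1.
have t_lt : ((km.-1 %% #|K|.-1).+1 < #|K|)%N.
  by rewrite -[X in (_ < X)%N](prednK (ltnW q_gt1)) ltnS ltn_pmod // -ltnS prednK // ltnW.
have t_mod : (km.-1 %% #|K|.-1).+1 = km %[mod #|K|.-1].
  by rewrite -addn1 modnDml addn1 prednK.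
exists (Ordinal t_lt); apply/eqP => /=.
by rewrite -modnMmr t_mod modnMmr mulnC kmE modnMDl.
Qed.

Lemma expr_sinv (x : K) : x ^+ (s * sinv K s) = x.
Proof.
rewrite /sinv; case: pickP => [t /andP[t_gt0 /eqP st] | none] /=; last first.
  by have [t t_sinv] := sinv_exists; rewrite none in t_sinv.
have [-> | x0] := eqVneq x 0.
  by rewrite expr0n muln_eq0 -!leqn0 leqNgt s_gt0 leqNgt t_gt0.
by rewrite -(expr_mod _ (expr_card_pred x0)) st expr_mod ?expr1 // expr_card_pred.
Qed.

Lemma expr_inj : injective (fun x : K => x ^+ s).
Proof. by move=> x y /= xy; rewrite -(expr_sinv x) -(expr_sinv y) !exprM xy. Qed.

Lemma sinv_eq (w b : K) : (w ^+ sinv K s == b) = (w == b ^+ s).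
Proof.
apply/eqP/eqP => [<- | ->]; last by rewrite -exprM expr_sinv.
by rewrite -exprM mulnC expr_sinv.
Qed.

End PowerMap.

(* W p s is convertible to weil_sum (psi p) s. *)
Definition weil_sum (K : finFieldType) (chi : K -> algC) (s : nat) (u : K) : algC :=
  \sum_(x : K) chi (x ^+ s - u * x).

Definition count_line (K : finFieldType) (s : nat) (c : K) : nat :=
  #|[set v : K | v ^+ s + (1 - v) ^+ s == c]|.

Section WeilSumMoments.
Variables (K : finFieldType) (chi : K -> algC) (s : nat).
Hypotheses (chiD : {morph chi : x y / x + y >-> x * y}) (chi0 : chi 0 = 1).
Hypothesis chi_nontrivial : exists y, chi y != 1.
Hypotheses (s_gt0 : (0 < s)%N) (s_inj : injective (fun x : K => x ^+ s)).

Local Notation q := (#|K|%:R : algC).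
Local Notation W := (weil_sum chi s).
Let sum_chi_mul := sum_char_mul chiD chi0 chi_nontrivial.

Lemma weil_sum0 : W 0 = 0.
Proof.
rewrite /weil_sum; under eq_bigr do rewrite mul0r subr0.
by rewrite (sum_expr s_inj chi) (sum_char chiD chi_nontrivial).
Qed.

Lemma weil_sum_scaleE (a u : K) : W (a * u) = \sum_x chi (x ^+ s) * chi (- (a * x) * u).
Proof. by apply: eq_bigr => x _; rewrite -chiD; congr chi; ring. Qed.

Lemma sum_weil_sum_char (c t : K) : c != 0 ->
  \sum_u W (c * u) * chi (t * u) = q * chi ((t / c) ^+ s).
Proof.
move=> c0; under eq_bigr do rewrite weil_sum_scaleE mulr_suml.
rewrite exchange_big /=.
transitivity (\sum_x if x == t / c then chi (x ^+ s) * q else 0).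
  apply: eq_bigr => x _; under eq_bigr do rewrite -mulrA -chiD -mulrDl addrC.
  rewrite -mulr_sumr sum_chi_mul subr_eq0 eq_sym [c * x]mulrC (can2_eq (mulfK c0) (divfK c0)).
  by case: eqP; rewrite ?mulr0.
by rewrite -big_mkcond big_pred1_eq mulrC.
Qed.

Lemma sum_weil_sum (c : K) : c != 0 -> \sum_u W (c * u) = q.
Proof.
move=> c0; transitivity (\sum_u W (c * u) * chi (0 * u)).
  by apply: eq_bigr => u _; rewrite mul0r chi0 mulr1.
by rewrite sum_weil_sum_char // mul0r expr0n eqn0Ngt s_gt0 chi0 mulr1.
Qed.

Lemma sum_weil_sum2 (a b : K) : b != 0 ->
  \sum_u W (a * u) * W (b * u) = if a == b then q ^+ 2 else 0.
Proof.
move=> b0; transitivity (\sum_x chi (x ^+ s) * (q * chi ((- (a * x) / b) ^+ s))).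
  under eq_bigr do rewrite weil_sum_scaleE mulr_suml.
  rewrite exchange_big; apply: eq_bigr => x _ /=.
  by rewrite -sum_weil_sum_char // mulr_sumr; apply: eq_bigr => u _; ring.
transitivity (q * \sum_x chi ((1 + (- a / b) ^+ s) * x)).
  rewrite -(sum_expr s_inj (fun x => chi ((1 + (- a / b) ^+ s) * x))) mulr_sumr.
  apply: eq_bigr => x _; rewrite mulrCA -chiD; congr (_ * chi _).
  by rewrite -mulNr mulrAC exprMn; ring.
have a_b : (1 + (- a / b) ^+ s == 0) = (a == b).
  rewrite mulNr exprN_inj // addr_eq0 opprK eq_sym -{1}(expr1n K s) (inj_eq s_inj).
  by rewrite (can2_eq (divfK b0) (mulfK b0)) mul1r.
by rewrite sum_chi_mul a_b; case: eqP; rewrite ?mulr0.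
Qed.

Lemma sum_weil_sum3 (a b c : K) : c != 0 ->
  \sum_u W (a * u) * W (b * u) * W (c * u) =
  q * \sum_x \sum_y chi (x ^+ s) * chi (y ^+ s) * chi ((- (a * x + b * y) / c) ^+ s).
Proof.
move=> c0.
under eq_bigr do rewrite (weil_sum_scaleE a) (weil_sum_scaleE b) big_distrlr !mulr_suml.
rewrite exchange_big mulr_sumr; apply: eq_bigr => x _ /=.
under eq_bigr do rewrite mulr_suml.
rewrite exchange_big mulr_sumr; apply: eq_bigr => y _ /=.
transitivity (chi (x ^+ s) * chi (y ^+ s) * \sum_u W (c * u) * chi (- (a * x + b * y) * u)).
  rewrite mulr_sumr; apply: eq_bigr => u _.
  have -> : - (a * x + b * y) * u = - (a * x) * u + - (b * y) * u by ring.
  by rewrite chiD; ring.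
by rewrite sum_weil_sum_char //; ring.
Qed.

Lemma sum_char_pow_line (e : K) :
  \sum_x \sum_y chi (x ^+ s) * chi (y ^+ s) * chi (e * (x + y) ^+ s) =
  q * (count_line s (- e))%:R.
Proof.
have zs : (0 : K) ^+ s = 0 by rewrite expr0n eqn0Ngt s_gt0.
(* Substitute y = w - x, then x = w v when w != 0. *)
transitivity (\sum_x \sum_w chi (x ^+ s + (w - x) ^+ s + e * w ^+ s)).
  apply: eq_bigr => x _; rewrite (reindex_inj (addIr (- x))); apply: eq_bigr => w _.
  by rewrite [x + _]addrC subrK !chiD.
transitivity (\sum_w \sum_v chi (w ^+ s * (v ^+ s + (1 - v) ^+ s + e))).
  rewrite exchange_big; apply: eq_bigr => w _ /=.
  have [-> | w0] := eqVneq w 0.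
    transitivity (\sum_(x : K) 1 : algC); apply: eq_bigr => x _;
    by rewrite ?sub0r ?exprN_inj // zs ?mulr0 ?addr0 ?subrr ?mul0r chi0.
  rewrite (reindex_inj (mulfI w0)); apply: eq_bigr => v _; congr chi.
  by rewrite -{2}[w]mulr1 -mulrBr !exprMn; ring.
rewrite exchange_big /=.
transitivity (\sum_v if v ^+ s + (1 - v) ^+ s == - e then q else 0).
  apply: eq_bigr => v _; rewrite -addr_eq0 -sum_chi_mul -(sum_expr s_inj).
  by apply: eq_bigr => w _; rewrite mulrC.
rewrite -big_mkcond sumr_const [RHS]mulr_natr; congr (_ *+ _).
by apply: eq_card => v; rewrite inE.
Qed.

Lemma sum_weil_sum_cube : \sum_u W u ^+ 3 = q ^+ 2 * (count_line s (1 : K))%:R.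
Proof.
transitivity (\sum_u W (1 * u) * W (1 * u) * W (1 * u)).
  by apply: eq_bigr => u _; rewrite mul1r; ring.
rewrite sum_weil_sum3 ?oner_neq0 // expr2 -mulrA -[in RHS](opprK (1 : K)).
rewrite -sum_char_pow_line.
congr (_ * _); apply: eq_bigr => x _; apply: eq_bigr => y _.
by rewrite !mul1r divr1 exprN_inj // mulN1r.
Qed.

Lemma sum_weil_sum_sqr_opp :
  \sum_u W u ^+ 2 * W (- u) = q ^+ 2 * (count_line s (-1 : K))%:R.
Proof.
transitivity (\sum_u W (1 * u) * W (1 * u) * W (-1 * u)).
  by apply: eq_bigr => u _; rewrite mul1r mulN1r expr2.
rewrite sum_weil_sum3 ?oppr_eq0 ?oner_neq0 // expr2 -mulrA -sum_char_pow_line.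
congr (_ * _); apply: eq_bigr => x _; apply: eq_bigr => y _.
by rewrite !mul1r invrN1 mulrN1 opprK.
Qed.

Lemma sum_weil_orbit (k : nat) (lam : K) : lam != 0 ->
  \sum_u \sum_(i < k) W (lam ^+ i * u) = (k * #|K|)%:R.
Proof.
move=> lam0; rewrite exchange_big /= (eq_bigr (fun _ => q)) => [|i _].
  by rewrite sumr_const card_ord natrM mulr_natl.
by rewrite sum_weil_sum // expf_neq0.
Qed.

Lemma sum_weil_orbit_sqr (k : nat) (lam : K) : k.-primitive_root lam ->
  \sum_u (\sum_(i < k) W (lam ^+ i * u)) ^+ 2 = (k * #|K| ^ 2)%:R.
Proof.
move=> lam_prim; have lam0 : lam != 0.
  by rewrite (prim_root_eq0 lam_prim) -lt0n (prim_order_gt0 lam_prim).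
under eq_bigr do rewrite expr2 big_distrlr /=.
rewrite exchange_big /= (eq_bigr (fun _ => q ^+ 2)) => [|i _].
  by rewrite sumr_const card_ord natrM natrX mulr_natl.
rewrite exchange_big /= (bigD1 i) //= sum_weil_sum2 ?expf_neq0 // eqxx big1 ?addr0 // => j ji.
rewrite sum_weil_sum2 ?expf_neq0 // (eq_prim_root_expr lam_prim) !modn_small //.
by move: ji; rewrite eq_sym -val_eqE => /negbTE ->.
Qed.

Lemma sum_weil_orbit2_cube :
  \sum_u (W u + W (- u)) ^+ 3 =
  (2 * #|K| ^ 2)%:R * (count_line s (1 : K) + 3 * count_line s (-1 : K))%:R.
Proof.
transitivity (\sum_u W u ^+ 3 + 3 * \sum_u W u ^+ 2 * W (- u)
   + 3 * \sum_u W u * W (- u) ^+ 2 + \sum_u W (- u) ^+ 3).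
  by rewrite !mulr_sumr -!big_split; apply: eq_bigr => u _ /=; ring.
have sqr_opp : \sum_u W u * W (- u) ^+ 2 = \sum_u W u ^+ 2 * W (- u).
  by rewrite (reindex_inj oppr_inj); apply: eq_bigr => u _; rewrite opprK mulrC.
have cube_opp : \sum_u W (- u) ^+ 3 = \sum_u W u ^+ 3.
  by rewrite (reindex_inj oppr_inj); apply: eq_bigr => u _; rewrite opprK.
rewrite sqr_opp cube_opp sum_weil_sum_cube sum_weil_sum_sqr_opp natrD natrM natrX.
ring.
Qed.
End WeilSumMoments.

Section LineCount.
Variables (K : finFieldType) (s : nat).
Hypotheses (s_gt0 : (0 < s)%N) (s_coprime : coprime s #|K|.-1).

Let s_inj := expr_inj s_gt0 s_coprime.

Lemma count_line0 : count_line s (0 : K) = 0%N.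
Proof.
apply: eq_card0 => v; rewrite !inE addr_eq0 -exprN_inj // (inj_eq s_inj).
by rewrite -subr_eq0 opprK addrC subrK oner_eq0.
Qed.

Lemma Q11_1E (b : K) : Q11 s 1 b = count_line s (b ^+ s).
Proof.
have line_inj : injective (fun v : K => (v, 1 - v)) by move=> v w [].
rewrite /count_line -(card_imset _ line_inj); apply: eq_card => -[v1 v2].
rewrite !inE /=; apply/idP/imsetP => [/andP[/eqP v12 pow_b] | [v]].
  have v2E : v2 = 1 - v1 by rewrite -v12 addrC addKr.
  by rewrite v2E in pow_b *; exists v1; rewrite // inE -sinv_eq.
by rewrite inE => pow_b [-> ->]; rewrite addrC subrK eqxx sinv_eq.
Qed.

Lemma V11E (b : K) : V11 s b = (count_line s (b ^+ s))%:Z.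
Proof. by rewrite /V11 !Q11_1E expr0n eqn0Ngt s_gt0 count_line0 subr0. Qed.

End LineCount.

Theorem lemma5p17 (K : finFieldType) (p : nat) (s k : nat) (lam : K) :
  p \in [pchar K] ->
  (0 < s)%N -> coprime s #|K|.-1 ->
  (0 < k)%N -> p = 1 %[mod k] ->
  k.-primitive_root lam ->
  let q := #|K| in
  let Om := Omega p s k lam in
  [/\ \sum_(u : K | u != 0) Om u ^+ 0 = (q.-1)%:R,
      \sum_(u : K | u != 0) Om u = (k * q)%:R,
      \sum_(u : K | u != 0) Om u ^+ 2 = (k * q ^ 2)%:R
    & k = 2%N ->
      \sum_(u : K | u != 0) Om u ^+ 3 =
        (2 * q ^ 2)%:R * ((V11 s (1 : K) + 3 * V11 s (-1 : K))%:~R)].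
Proof.
move=> pK s_gt0 s_coprime k_gt0 _ lam_prim q Om.
have s_inj := expr_inj s_gt0 s_coprime.
have psi_add := psiD pK; have psi_zero := psi0 pK; have psi_nt := psi_nontrivial pK.
have lam0 : lam != 0 by rewrite (prim_root_eq0 lam_prim) -lt0n.
have Om0 : Om 0 = 0.
  by rewrite /Om /Omega big1 // => i _; rewrite mulr0; apply: weil_sum0.
have sum_nz n : (0 < n)%N -> \sum_(u | u != 0) Om u ^+ n = \sum_u Om u ^+ n.
  by move=> n_gt0; rewrite [RHS](bigD1 0) //= Om0 expr0n eqn0Ngt n_gt0 add0r.
split.
- by under eq_bigr do rewrite expr0; rewrite sumr_const -(cardC1 0).
- under eq_bigr do rewrite -[Om _]expr1.
  by rewrite sum_nz //; under eq_bigr do rewrite expr1; apply: sum_weil_orbit.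
- by rewrite sum_nz //; apply: sum_weil_orbit_sqr.
move=> k2; subst k.
have lamN1 : lam = -1.
  move: (prim_expr_order lam_prim) => /eqP; rewrite sqrf_eq1 => /orP[/eqP lam1 | /eqP //].
  by move: (eq_prim_root_expr lam_prim 1 0); rewrite expr1 expr0 lam1 eqxx.
have OmE u : Om u = W p s u + W p s (- u).
  by rewrite /Om /Omega !big_ord_recl big_ord0 /= expr1 expr0 lamN1 mul1r mulN1r addr0.
rewrite sum_nz //; under eq_bigr do rewrite OmE.
rewrite (sum_weil_orbit2_cube psi_add psi_zero psi_nt s_gt0 s_inj) !V11E // exprN_inj // expr1n.
by rewrite -PoszM -PoszD pmulrn.
Qed.
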